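(* Let $n\ge 3$. For each positive integer $m$ and each $1\le i<j\le n$, we have $A_{i,j}^m\in B_n[2m]$, where $A_{i,j}=\sigma_{j-1}\sigma_{j-2}\cdots\sigma_{i+1}\sigma_i^2\sigma_{i+1}^{-1}\cdots\sigma_{j-2}^{-1}\sigma_{j-1}^{-1}$.
   Context: $B_n$ denotes the braid group on $n$ strands with standard Artin generators $\sigma_1,\dots,\sigma_{n-1}$ (the elements $A_{i,j}$ are the standard generators of the pure braid group $PB_n$). The reduced integral Burau representation $\rho_{-1}: B_n \to GL(n-1,\mathbb{Z})$ is defined on generators by $\rho_{-1}(\sigma_1)=\begin{pmatrix}1&0\\1&1\end{pmatrix}\oplus \mathrm{Id}_{n-3}$, $\rho_{-1}(\sigma_{n-1})=\mathrm{Id}_{n-3}\oplus\begin{pmatrix}1&-1\\0&1\end{pmatrix}$, and for $1<i<n-1$, $\rho_{-1}(\sigma_i)=\mathrm{Id}_{i-2}\oplus\begin{pmatrix}1&-1&0\\0&1&0\\0&1&1\end{pmatrix}\oplus \mathrm{Id}_{n-i-2}$, where $\oplus$ denotes block-diagonal sum. For a positive integer $\ell$, let $r_\ell: GL(n-1,\mathbb{Z})\to GL(n-1,\mathbb{Z}/\ell\mathbb{Z})$ be entrywise reduction mod $\ell$. The level $\ell$ congruence subgroup of the braid group is $B_n[\ell] := \ker(r_\ell\circ\rho_{-1})$. *)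

From mathcomp Require Import all_boot all_order all_algebra.
Set Implicit Arguments. Unset Strict Implicit. Unset Printing Implicit Defensive.
Import Order.TTheory GRing.Theory Num.Theory.
Local Open Scope ring_scope.

(* A braid word: a list of letters (i, b) standing for sigma_i (b = true)
   or sigma_i^{-1} (b = false), with 1 <= i <= n-1. *)
Definition letter := (nat * bool)%type.
Definition sig (i : nat) : letter := (i, true).
Definition sigi (i : nat) : letter := (i, false).

(* Reduced integral Burau matrix rho_{-1}(sigma_i) in GL(n-1, Z), written out
   entrywise (0-indexed rows r and columns c, i is 1-indexed as in the paper):
   - i = 1     : Id + E_{1,0}                      (block [[1,0],[1,1]] at rows 0,1)
   - i = n-1   : Id - E_{n-3,n-2}                  (block [[1,-1],[0,1]] at rows n-3,n-2)
   - 1<i<n-1   : Id - E_{i-2,i-1} + E_{i,i-1}       (block [[1,-1,0],[0,1,0],[0,1,1]]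
                                                    at rows i-2, i-1, i). *)
Definition burau_gen (n i : nat) : 'M[int]_(n.-1) :=
  \matrix_(r < n.-1, c < n.-1)
    if i == 1%N then
      ((val r == val c)%:Z + ((val r == 1%N) && (val c == 0%N))%:Z)
    else if i == n.-1 then
      ((val r == val c)%:Z - ((val r == (n - 3)%N) && (val c == (n - 2)%N))%:Z)
    else
      ((val r == val c)%:Z - ((val r == (i - 2)%N) && (val c == (i - 1)%N))%:Z
                   + ((val r == i) && (val c == (i - 1)%N))%:Z).

Definition burau_letter (n : nat) (l : letter) : 'M[int]_(n.-1) :=
  if l.2 then burau_gen n l.1 else invmx (burau_gen n l.1).

Definition burau (n : nat) (w : seq letter) : 'M[int]_(n.-1) :=
  foldr (fun l M => burau_letter n l *m M) 1%:M w.

(* The braid represented by w lies in B_n[l] = ker (r_l o rho_{-1}):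
   rho_{-1}(w) is congruent to the identity entrywise modulo l. *)
Definition in_congruence_subgroup (n l : nat) (w : seq letter) : Prop :=
  forall r c : 'I_(n.-1), (burau n w r c = (1%:M : 'M[int]_(n.-1)) r c %[mod l%:Z])%Z.

Definition A_word (i j : nat) : seq letter :=
  [seq sig k | k <- rev (iota i.+1 (j - i.+1))]
  ++ [:: sig i; sig i]
  ++ [seq sigi k | k <- iota i.+1 (j - i.+1)].

Definition word_pow (w : seq letter) (m : nat) : seq letter := flatten (nseq m w).

Example burau_gen_check3 :
  burau_gen 4 2 = \matrix_(r < 3, c < 3)
    (nth 0 (nth [::] [:: [:: 1; -1; 0]; [:: 0; 1; 0]; [:: 0; 1; 1]] r) c).
Proof. by apply/matrixP=> r c; rewrite !mxE; case: r => [[|[|[|]]] ?]; case: c => [[|[|[|]]] ?]. Qed.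
Example A_word_check : A_word 1 4 = [:: sig 3; sig 2; sig 1; sig 1; sigi 2; sigi 3].
Proof. by []. Qed.

From mathcomp Require Import all_boot all_order all_algebra.
From mathcomp Require Import zify.
Set Implicit Arguments. Unset Strict Implicit. Unset Printing Implicit Defensive.
Import GRing.Theory.

(* Each Burau generator is unipotent of a very special shape: rho(sigma_k) = 1 + N
   where N is supported in column k-1 and vanishes on the diagonal, so N^2 = 0
   and rho(sigma_k^2) = 1 + 2N.  Since A_{i,j} is a conjugate of sigma_i^2,
   rho(A_{i,j}) = 1 + 2K with K^2 = 0, whence rho(A_{i,j}^m) = 1 + 2mK, which is
   congruent to the identity modulo 2m. *)

Local Open Scope ring_scope.

Section SquareZero.
Variable R : pzRingType.

Lemma sqr0_exp1D (N : R) (m : nat) : N * N = 0 -> (1 + N) ^+ m = 1 + N *+ m.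
Proof.
move=> NN; elim: m => [|m IH]; first by rewrite expr0 mulr0n addr0.
by rewrite exprSr IH mulrDr mulr1 mulrDl mul1r mulrnAl NN mul0rn addr0 mulrSr addrA.
Qed.

Lemma sqr0_mulrn (N : R) (k : nat) : N * N = 0 -> (N *+ k) * (N *+ k) = 0.
Proof. by move=> NN; rewrite mulrnAl mulrnAr NN !mul0rn. Qed.

Lemma sqr0_conj (P Q N : R) : Q * P = 1 -> N * N = 0 ->
  (P * N * Q) * (P * N * Q) = 0.
Proof. by move=> QP NN; rewrite -!mulrA (mulrA Q) QP mul1r (mulrA N) NN !mul0r mulr0. Qed.

End SquareZero.

Lemma mx_col_support_sqr0 (R : pzSemiRingType) d (N : 'M[R]_d) (c0 : nat) :
  (forall r c, N r c != 0 -> val c = c0 /\ val r != c0) -> N * N = 0.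
Proof.
move=> supp; apply/matrixP => r c; rewrite -mulmxE !mxE; apply: big1 => l _.
have [->|/supp[l_c0 _]] := eqVneq (N r l) 0; first by rewrite mul0r.
have [->|/supp[_ /eqP[]]] := eqVneq (N l c) 0; by rewrite ?mulr0.
Qed.

Lemma burau_cat n (a b : seq letter) : burau n (a ++ b) = burau n a * burau n b.
Proof.
elim: a => [|l a IH]; first by rewrite /= -mulmxE mul1mx.
by rewrite /= -/(burau n (a ++ b)) IH -!mulmxE mulmxA.
Qed.

Lemma burau_word_pow n (w : seq letter) (m : nat) :
  burau n (word_pow w m) = burau n w ^+ m.
Proof.
elim: m => [|m IH]; first by rewrite expr0 /= idmxE.
by rewrite exprS -IH /word_pow /= burau_cat.
Qed.

Lemma burau_gen_sub1_support n k (r c : 'I_n.-1) :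
  (burau_gen n k - 1) r c != 0 -> val c = k.-1 /\ val r != k.-1.
Proof.
rewrite -idmxE !mxE -[r == c]/(val r == val c) natz.
have := ltn_ord r; have := ltn_ord c; move: (val r) (val c) => a b hb ha.
by do 2?case: ifP => /eqP; lia.
Qed.

Lemma burau_gen_sub1_sqr0 n k :
  (burau_gen n k - 1) * (burau_gen n k - 1) = 0.
Proof. exact: mx_col_support_sqr0 (@burau_gen_sub1_support n k). Qed.

Lemma burau_gen_unit n k : burau_gen n k \in unitmx.
Proof.
have NN := burau_gen_sub1_sqr0 n k.
set N := burau_gen n k - 1 in NN.
have -> : burau_gen n k = 1 + N by rewrite addrC subrK.
suff /mulmx1_unit[] : (1 + N) *m (1 - N) = 1%:M by [].
by rewrite mulmxE idmxE mulrDl mul1r mulrBr mulr1 NN subr0 subrK.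
Qed.

Lemma burau_sig_rev_sigi n (s : seq nat) :
  burau n [seq sig k | k <- rev s] * burau n [seq sigi k | k <- s] = 1.
Proof.
elim: s => [|k s IH] /=; first by rewrite -idmxE mulr1.
rewrite rev_cons map_rcons -cats1 burau_cat /= -!mulmxE mulmx1 /burau_letter /=.
by rewrite -mulmxA (mulmxA (burau_gen n k)) mulmxV ?burau_gen_unit // mul1mx mulmxE IH.
Qed.

Lemma burau_A_word n i j : exists K : 'M[int]_n.-1,
  K * K = 0 /\ burau n (A_word i j) = 1 + K *+ 2.
Proof.
rewrite /A_word; set s := iota _ _.
set P := burau n [seq sig k | k <- rev s].
set Q := burau n [seq sigi k | k <- s].
have PQ : P * Q = 1 := burau_sig_rev_sigi n s.
have QP : Q * P = 1 by move: PQ; rewrite -mulmxE -idmxE; apply: mulmx1C.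
set N := burau_gen n i - 1.
have NN : N * N = 0 := burau_gen_sub1_sqr0 n i.
exists (P * N * Q); split; first exact: sqr0_conj.
have sigma2 : burau n [:: sig i; sig i] = (1 + N) ^+ 2.
  by rewrite /= /burau_letter /= mulmx1 mulmxE addrC subrK.
rewrite !burau_cat -/P -/Q sigma2 sqr0_exp1D // mulrDl mul1r mulrDr PQ.
by rewrite mulrnAl mulrnAr mulrA.
Qed.

Theorem corollary2p5 (n : nat) (hn : (3 <= n)%N) (m : nat) (hm : (0 < m)%N)
  (i j : nat) (hi : (1 <= i)%N) (hij : (i < j)%N) (hjn : (j <= n)%N) :
  in_congruence_subgroup n (2 * m) (word_pow (A_word i j) m).
Proof.
have [K [KK burauA]] := burau_A_word n i j.
move=> r c; rewrite burau_word_pow burauA sqr0_exp1D ?sqr0_mulrn // -mulrnA.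
by rewrite mxE mulmxnE -mulr_natr natz addrC modzMDl idmxE.
Qed.
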